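(* Let $\mathcal V$ be a finite-dimensional Euclidean space, consider linear losses $f_t(x)=\langle g_t,x\rangle$ and uniform delay $\tau$, i.e. $\mathcal S_t=\{1,\dots,t-\tau-1\}$ for all $t$. Run DODA with guesses $\tilde g_{t+1/2}=g_{t-\tau-1}$ and constant learning rates $\eta=r/\sqrt{(2\tau+1)V^{\tau+1}_T}$, $\gamma=(2\tau+1)\eta$, where $r\ge\|p-x_1\|$ and $V^{\tau+1}_T>0$. Then \[R_T(p)\le r\sqrt{(2\tau+1)V^{\tau+1}_T}.\]
   Context: DODA (unconstrained Euclidean): given $x_1\in\mathcal V$, $x_t=x_1-\eta_t\sum_{s\in\mathcal S_t}g_{s+1/2}$ and $x_{t+1/2}=x_t-\gamma_t\tilde g_{t+1/2}$; the played point at round $t$ is $x_{t+1/2}$, with feedback $g_{t+1/2}=\nabla f_t(x_{t+1/2})$, which for linear losses equals $g_t$. Regret: $R_T(p)=\sum_{t=1}^Tf_t(x_{t+1/2})-\sum_{t=1}^Tf_t(p)$. Convention $g_t=0$ for $t\le0$. The $(\tau+1)$-variation is $V^{\tau+1}_T=\sum_{t=1}^T\|g_t-g_{t-\tau-1}\|^2$. *)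

From HB Require Import structures.
From mathcomp Require Import all_boot all_order all_algebra.
From mathcomp Require Import reals.
Set Implicit Arguments. Unset Strict Implicit. Unset Printing Implicit Defensive.
Import Order.TTheory GRing.Theory Num.Theory.
Local Open Scope ring_scope.

Section DODA.
Variables (R : realType) (n : nat).

Definition dot (u v : 'rV[R]_n) : R := \sum_(i < n) u 0 i * v 0 i.
Definition enorm (u : 'rV[R]_n) : R := Num.sqrt (dot u u).

(* g : nat -> V gives g_t for t >= 1; convention g_t = 0 for t <= 0.
   gshift g d t = g_{t-d} (zero when t - d <= 0). *)
Definition gshift (g : nat -> 'rV[R]_n) (d t : nat) : 'rV[R]_n :=
  if (d < t)%N then g (t - d)%N else 0.

(* DODA with uniform delay tau, S_t = {1,...,t-tau-1}, linear losses
   (so g_{s+1/2} = g_s), constant rates eta, gamma. *)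
Definition doda_x (x1 : 'rV[R]_n) (g : nat -> 'rV[R]_n) (tau : nat) (eta : R)
  (t : nat) : 'rV[R]_n :=
  x1 - eta *: \sum_(1 <= s < (t - tau)%N) g s.

(* played point x_{t+1/2} with guess g~_{t+1/2} = g_{t-tau-1} *)
Definition doda_play (x1 : 'rV[R]_n) (g : nat -> 'rV[R]_n) (tau : nat)
  (eta gamma : R) (t : nat) : 'rV[R]_n :=
  doda_x x1 g tau eta t - gamma *: gshift g tau.+1 t.

Definition regret (x1 : 'rV[R]_n) (g : nat -> 'rV[R]_n) (tau : nat)
  (eta gamma : R) (T : nat) (p : 'rV[R]_n) : R :=
  \sum_(1 <= t < T.+1) (dot (g t) (doda_play x1 g tau eta gamma t) - dot (g t) p).

Definition variation (g : nat -> 'rV[R]_n) (tau T : nat) : R :=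
  \sum_(1 <= t < T.+1) enorm (g t - gshift g tau.+1 t) ^+ 2.

End DODA.

From HB Require Import structures.
From mathcomp Require Import all_boot all_order all_algebra.
From mathcomp Require Import reals.
From mathcomp Require Import ring lra zify.
Import Order.TTheory GRing.Theory Num.Theory.
Local Open Scope ring_scope.

(* The played point is [x1 - eta G_(t-tau) - gamma g_(t-tau-1)] with
   [G_m = g_1 + ... + g_(m-1)], so for [w = x1 - p] the regret is
   [<G_(T+1), w> - eta sum_t <g_t, G_(t-tau)> - gamma sum_t <g_t, g_(t-tau-1)>].
   Young's inequality bounds [2 eta <G_(T+1), w>] by [|w|^2 + eta^2 |G_(T+1)|^2],
   and [|G_(T+1)|^2 = sum_t (2 <g_t, G_t> + |g_t|^2)] telescopes.  The [tau]
   gradients in [G_t] but not in [G_(t-tau)] cost at most [tau sum_t |g_t|^2],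
   again by Young; with [gamma = (2 tau + 1) eta] what is left is
   [(2 tau + 1) eta^2 sum_t (|g_t|^2 - 2 <g_t, g_(t-tau-1)>)], at most
   [(2 tau + 1) eta^2 V].  Hence [2 eta R_T(p) <= |p - x1|^2 + (2 tau + 1) eta^2 V],
   and the chosen [eta] balances the two terms. *)

Section NatSums.
Context {R : numDomainType}.
Implicit Types f : nat -> R.

Lemma sum_delayed f k T :
  \sum_(1 <= t < T.+1) (if (k < t)%N then f (t - k)%N else 0) =
  \sum_(1 <= s < T.+1 - k) f s.
Proof.
elim: T => [|T IH]; first by rewrite !big_geq // leq_subr.
rewrite big_nat_recr //= IH; case: ifP => lt_kT.
  have -> : (T.+2 - k = (T.+1 - k).+1)%N by lia.
  by rewrite [in RHS]big_nat_recr //=; lia.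
by rewrite addr0 !big_geq //; lia.
Qed.

Lemma ler_sum_nat_widen f a m M : (forall i, 0 <= f i) -> (m <= M)%N ->
  \sum_(a <= i < m) f i <= \sum_(a <= i < M) f i.
Proof.
move=> f_ge0 le_mM; rewrite (big_nat_widen _ _ _ _ _ le_mM) big_mkcond /=.
by apply: ler_sum_nat => i _; case: ifP.
Qed.

End NatSums.

Section InnerProduct.
Context {R : realType} {n : nat}.
Implicit Types (u v w : 'rV[R]_n).

Lemma dotC u v : dot u v = dot v u.
Proof. by apply: eq_bigr => i _; rewrite mulrC. Qed.

Lemma dotDl u v w : dot (u + v) w = dot u w + dot v w.
Proof. by rewrite /dot -big_split; apply: eq_bigr => i _; rewrite mxE mulrDl. Qed.

Lemma dotNl u v : dot (- u) v = - dot u v.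
Proof. by rewrite /dot -sumrN; apply: eq_bigr => i _; rewrite mxE mulNr. Qed.

Lemma dotZl a u v : dot (a *: u) v = a * dot u v.
Proof. by rewrite /dot mulr_sumr; apply: eq_bigr => i _; rewrite mxE mulrA. Qed.

Lemma dot0l v : dot 0 v = 0.
Proof. by rewrite /dot big1 // => i _; rewrite mxE mul0r. Qed.

Lemma dotBl u v w : dot (u - v) w = dot u w - dot v w.
Proof. by rewrite dotDl dotNl. Qed.

Lemma dotBr u v w : dot w (u - v) = dot w u - dot w v.
Proof. by rewrite dotC dotBl !(dotC w). Qed.

Lemma dotDr u v w : dot w (u + v) = dot w u + dot w v.
Proof. by rewrite dotC dotDl !(dotC w). Qed.

Lemma dotZr a u v : dot v (a *: u) = a * dot v u.
Proof. by rewrite dotC dotZl dotC. Qed.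

Lemma dot_suml (I : Type) (r : seq I) (P : pred I) (F : I -> 'rV[R]_n) v :
  dot (\sum_(i <- r | P i) F i) v = \sum_(i <- r | P i) dot (F i) v.
Proof. exact: (big_morph (fun x => dot x v) (fun x y => dotDl x y v) (dot0l v)). Qed.

Lemma dot_sumr (I : Type) (r : seq I) (P : pred I) (F : I -> 'rV[R]_n) v :
  dot v (\sum_(i <- r | P i) F i) = \sum_(i <- r | P i) dot v (F i).
Proof. by rewrite dotC dot_suml; apply: eq_bigr => i _; rewrite dotC. Qed.

Lemma dot_ge0 u : 0 <= dot u u.
Proof. by rewrite sumr_ge0 // => i _; rewrite -expr2 sqr_ge0. Qed.

Lemma dot_eq0 u : (dot u u == 0) = (u == 0).
Proof.
apply/idP/eqP => [/eqP u2_eq0 | ->]; last by rewrite dot0l.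
apply/matrixP => i j; rewrite (ord1 i) mxE; apply/eqP; rewrite -sqrf_eq0 expr2.
by apply/eqP/(psumr_eq0P _ u2_eq0) => // k _; rewrite -expr2 sqr_ge0.
Qed.

Lemma enorm_sqr u : enorm u ^+ 2 = dot u u.
Proof. by rewrite sqr_sqrtr // dot_ge0. Qed.

Lemma enorm_eq0 u : (enorm u == 0) = (u == 0).
Proof. by rewrite -dot_eq0 sqrtr_eq0 eq_le dot_ge0 andbT. Qed.

Lemma enormN u : enorm (- u) = enorm u.
Proof. by rewrite /enorm dotNl dotC dotNl opprK. Qed.

Lemma young_dot a u v : 2 * a * dot u v <= dot u u + a ^+ 2 * dot v v.
Proof.
have := dot_ge0 (u - a *: v).
by rewrite !dotBl !dotBr !dotZl !dotZr (dotC v u); lra.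
Qed.

End InnerProduct.

Section Regret.
Context {R : realType} {n : nat}.
Variables (g : nat -> 'rV[R]_n) (tau T : nat).

Definition gsum (m : nat) : 'rV[R]_n := \sum_(1 <= s < m) g s.

Local Notation sum_sqr := (\sum_(1 <= t < T.+1) dot (g t) (g t)).

Lemma gsum_subS t k : gsum (t - k) = gsum (t - k.+1) + gshift g k.+1 t.
Proof.
rewrite /gshift; case: ltnP => [lt_kt | le_tk].
  have -> : (t - k = (t - k.+1).+1)%N by lia.
  by rewrite /gsum big_nat_recr //=; lia.
by rewrite addr0 /gsum !big_geq //; lia.
Qed.

Lemma gsum_sub_delayed t :
  gsum t - gsum (t - tau) = \sum_(0 <= k < tau) gshift g k.+1 t.
Proof.
elim: tau => [|k IH]; first by rewrite subn0 subrr big_geq.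
by rewrite big_nat_recr //= -IH (gsum_subS t k) opprD addrA addrNK.
Qed.

Lemma dot_gsum_telescope :
  dot (gsum T.+1) (gsum T.+1) =
  \sum_(1 <= t < T.+1) (2 * dot (g t) (gsum t) + dot (g t) (g t)).
Proof.
elim: T => [|m IH]; first by rewrite /gsum !big_geq // dot0l.
rewrite /gsum big_nat_recr //= -/(gsum m.+1) [in RHS]big_nat_recr //= -IH.
by rewrite !dotDl !dotDr (dotC (gsum m.+1)); lra.
Qed.

Lemma sum_dot_gshift_le k :
  \sum_(1 <= t < T.+1) dot (gshift g k t) (gshift g k t) <= sum_sqr.
Proof.
rewrite (eq_bigr (fun t => if (k < t)%N then dot (g (t - k)) (g (t - k)) else 0));
  last by move=> t _; rewrite /gshift; case: ifP; rewrite ?dot0l.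
rewrite (sum_delayed (fun s => dot (g s) (g s))).
by apply: ler_sum_nat_widen; [move=> s; apply: dot_ge0 | apply: leq_subr].
Qed.

Lemma delayed_drift_le :
  \sum_(1 <= t < T.+1) dot (g t) (gsum t - gsum (t - tau)) <= tau%:R * sum_sqr.
Proof.
set h := fun k t => gshift g k.+1 t.
have young_t t : 2 * dot (g t) (gsum t - gsum (t - tau)) <=
    \sum_(0 <= k < tau) (dot (g t) (g t) + dot (h k t) (h k t)).
  rewrite gsum_sub_delayed dot_sumr mulr_sumr; apply: ler_sum_nat => k _.
  by have := young_dot 1 (g t) (h k t); rewrite mulr1 expr1n mul1r.
have shifted : \sum_(1 <= t < T.+1) \sum_(0 <= k < tau) dot (h k t) (h k t)
    <= tau%:R * sum_sqr.
  rewrite exchange_big_nat /=; apply: le_trans (_ : \sum_(0 <= k < tau) sum_sqr <= _).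
    by apply: ler_sum_nat => k _; apply: sum_dot_gshift_le.
  by rewrite sumr_const_nat subn0 mulr_natl.
have := ler_sum_nat (m := 1) (n := T.+1) (fun t _ => young_t t).
under [X in _ <= X]eq_bigr do rewrite big_split /= sumr_const_nat subn0 -mulr_natl.
by rewrite -mulr_sumr big_split /= -mulr_sumr; lra.
Qed.

Lemma variationE :
  variation g tau T = sum_sqr
    - 2 * \sum_(1 <= t < T.+1) dot (g t) (gshift g tau.+1 t)
    + \sum_(1 <= t < T.+1) dot (gshift g tau.+1 t) (gshift g tau.+1 t).
Proof.
rewrite mulr_sumr -sumrB -big_split /=; apply: eq_bigr => t _.
by rewrite enorm_sqr !dotBl !dotBr (dotC (gshift _ _ _)); lra.
Qed.

Lemma regretE x1 p eta gamma :
  regret x1 g tau eta gamma T p =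
  dot (gsum T.+1) (x1 - p)
    - eta * \sum_(1 <= t < T.+1) dot (g t) (gsum (t - tau))
    - gamma * \sum_(1 <= t < T.+1) dot (g t) (gshift g tau.+1 t).
Proof.
rewrite /gsum dot_suml !mulr_sumr -!sumrB; apply: eq_bigr => t _.
by rewrite /doda_play /doda_x !dotBr !dotZr -/(gsum _); lra.
Qed.

Lemma regret_bound x1 p eta :
  2 * eta * regret x1 g tau eta ((2 * tau + 1)%:R * eta) T p <=
  enorm (p - x1) ^+ 2 + eta ^+ 2 * ((2 * tau + 1)%:R * variation g tau T).
Proof.
set c : R := (2 * tau + 1)%:R; have c_def : c = 2 * tau%:R + 1 by rewrite /c natrD natrM.
rewrite regretE -[p - x1]opprB enormN enorm_sqr variationE.
set P := \sum_(1 <= t < _) dot _ (gsum (t - tau)).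
set Q := \sum_(1 <= t < _) dot _ (gshift _ _ _).
set H := \sum_(1 <= t < _) dot (gshift _ _ _) _.
have young := young_dot eta (x1 - p) (gsum T.+1).
rewrite dotC dot_gsum_telescope big_split /= -mulr_sumr in young.
have := delayed_drift_le.
rewrite (eq_bigr _ (fun t _ => dotBr _ _ _)) sumrB -/P => drift.
have H_ge0 : 0 <= H by rewrite sumr_ge0 // => t _; apply: dot_ge0.
have tauH_ge0 : 0 <= tau%:R * H by rewrite mulr_ge0.
have : eta ^+ 2 * (2 * (\sum_(1 <= t < T.+1) dot (g t) (gsum t) - P)
                   + sum_sqr - 2 * c * Q) <= eta ^+ 2 * (c * (sum_sqr - 2 * Q + H)).
  by apply: ler_wpM2l; [exact: sqr_ge0 | rewrite c_def; lra].
by nra.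
Qed.

End Regret.

Theorem corollary2 (R : realType) (n : nat) (x1 p : 'rV[R]_n)
  (g : nat -> 'rV[R]_n) (tau T : nat) (r eta gamma : R) :
  enorm (p - x1) <= r ->
  0 < variation g tau T ->
  eta = r / Num.sqrt ((2 * tau + 1)%:R * variation g tau T) ->
  gamma = (2 * tau + 1)%:R * eta ->
  regret x1 g tau eta gamma T p <= r * Num.sqrt ((2 * tau + 1)%:R * variation g tau T).
Proof.
move=> le_pr V_gt0 eta_def gamma_def.
set c : R := (2 * tau + 1)%:R in eta_def gamma_def *.
set s := Num.sqrt (c * variation g tau T) in eta_def *.
have s_gt0 : 0 < s by rewrite sqrtr_gt0 mulr_gt0 // ltr0n addn1.
have norm_ge0 : 0 <= enorm (p - x1) by exact: sqrtr_ge0.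
have [r_gt0 | r_le0] := ltrP 0 r; last first.
  have r0 : r = 0 by apply/eqP; rewrite eq_le r_le0 (le_trans norm_ge0).
  have -> : p = x1 by apply/eqP; rewrite -subr_eq0 -enorm_eq0 eq_le norm_ge0 -r0 le_pr.
  rewrite gamma_def eta_def r0 !mul0r mulr0 /regret big1 // => t _.
  by rewrite /doda_play /doda_x !scale0r !subr0 subrr.
have eta_gt0 : 0 < eta by rewrite eta_def divr_gt0.
have eta_s : eta * s = r by rewrite eta_def divfK // gt_eqF.
have s_sqr : s ^+ 2 = c * variation g tau T.
  by rewrite sqr_sqrtr // mulr_ge0 // ?ler0n ltW.
have norm_sqr_le : enorm (p - x1) ^+ 2 <= r ^+ 2 by rewrite lerXn2r // nnegrE ltW.
have bound := regret_bound g tau T x1 p eta.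
rewrite -/c -gamma_def -s_sqr -exprMn eta_s in bound.
rewrite -(ler_pM2l (mulr_gt0 (ltr0Sn _ 1) eta_gt0)).
have -> : 2 * eta * (r * s) = 2 * r ^+ 2 by rewrite -eta_s; ring.
lra.
Qed.
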